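(* Work on $\mathbb{R}^d$ with coordinates $x^\mu$ and smooth fields (non-singular at $x=0$). The map $\omega\mapsto e$ given by $$e^a_\mu(x)=\delta^a_\mu+\int_0^1 \omega^a_{\ b\mu}(tx)\,t\,x^b\,dt,$$ with inverse $e\mapsto\omega$ given by $\omega^a_{\ b}=\tfrac12\left(-e^c\wedge i_b i_a de^c+i_b de^a-i_a de^b\right)$, is a bijection between: (i) the space of spin-connections $\omega^a_{\ b}$ satisfying the Fock–Schwinger gauge condition $x^\mu\omega^a_{\ b\mu}(x)=0$ and the torsionless condition $de^a+\omega^a_{\ b}\wedge e^b=0$, where $e^a_\mu(x)=\delta^a_\mu+\int_0^1 \omega^a_{\ b\mu}(tx)\,t\,x^b\,dt$; (ii) the space of vielbeins $e^a=e^a_\mu dx^\mu$ satisfying $$x^\mu e^a_\mu(x)=x^a,\qquad x^a e^a_\mu(x)=x^\mu,\qquad i_a\mathcal L_{\mathfrak r}e^b=i_b\mathcal L_{\mathfrak r}e^a .$$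
   Context: Latin indices $a,b,c\in\{1,\dots,d\}$ are frame indices, Greek indices coordinate indices; frame indices are raised/lowered with $\delta_{ab}$, repeated indices summed, and $x^a=\delta^a_\mu x^\mu$. Spin-connections $\omega^a_{\ b}=\omega^a_{\ b\mu}dx^\mu$ are $\mathfrak{so}(d)$-valued 1-forms. A vielbein is a coframe $e^a=e^a_\mu dx^\mu$ (invertible matrix $e^a_\mu$); its dual vector fields are $e_a=e_a^{\ \mu}\partial_\mu$ with $e^a_\mu e_a^{\ \nu}=\delta^\nu_\mu$, and $i_a$ is the interior product with $e_a$. $\mathfrak r=x^\mu\partial_\mu$ is the radial vector field and $\mathcal L_{\mathfrak r}$ the Lie derivative along it (on a $p$-form, $(\mathcal L_{\mathfrak r}\sigma)_{\mu_1\dots\mu_p}=(x^\nu\partial_\nu+p)\sigma_{\mu_1\dots\mu_p}$). Conventions: $(d\omega)_{\mu_1\dots\mu_{p+1}}=(p+1)\partial_{[\mu_1}\omega_{\mu_2\dots\mu_{p+1}]}$, $(\omega\wedge\sigma)_{\mu_1\dots\mu_{p+q}}=\frac{(p+q)!}{p!q!}\omega_{[\mu_1\dots\mu_p}\sigma_{\mu_{p+1}\dots\mu_{p+q}]}$, $(i_X\omega)_{\mu_2\dots\mu_p}=X^{\mu_1}\omega_{\mu_1\dots\mu_p}$. *)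

From HB Require Import structures.
From mathcomp Require Import all_boot all_order all_algebra.
From mathcomp Require Import all_classical all_reals all_analysis.
Set Implicit Arguments. Unset Strict Implicit. Unset Printing Implicit Defensive.
Import Order.TTheory GRing.Theory Num.Theory.
Import numFieldNormedType.Exports.
Local Open Scope classical_set_scope.
Local Open Scope ring_scope.

(* Points of R^d are row vectors 'rV[R]_d; coordinate x^mu is  x ord0 mu.
   Frame and coordinate indices both range over 'I_d. *)

Section Fields.
Variables (R : realType) (d : nat).
Notation V := 'rV[R]_d.

Definition coord (x : V) (mu : 'I_d) : R := x ord0 mu.

Definition partial (mu : 'I_d) (f : V -> R) : V -> R :=
  fun x => 'D_(delta_mx ord0 mu) f x.

Fixpoint iter_partial (s : seq 'I_d) (f : V -> R) : V -> R :=
  match s with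
  | [::] => f
  | mu :: s' => partial mu (iter_partial s' f)
  end.

Definition smooth (f : V -> R) : Prop :=
  forall s : seq 'I_d,
    continuous (iter_partial s f) /\
    (forall (mu : 'I_d) (x : V), derivable (iter_partial s f) x (delta_mx ord0 mu)).

(* A spin-connection: omega a b mu x = omega^a_{b mu}(x).
   A vielbein candidate: e a mu x = e^a_mu(x). *)
Definition spin_conn := 'I_d -> 'I_d -> 'I_d -> V -> R.
Definition frame := 'I_d -> 'I_d -> V -> R.

Definition emx (e : frame) (x : V) : 'M[R]_d := \matrix_(a, mu) e a mu x.

(* dual vector fields: e_a^mu(x), satisfying sum_a e^a_mu e_a^nu = delta^nu_mu *)
Definition edual (e : frame) (a mu : 'I_d) (x : V) : R := invmx (emx e x) mu a.

Definition is_vielbein (e : frame) : Prop :=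
  (forall a mu, smooth (e a mu)) /\ (forall x, emx e x \in unitmx).

Definition dform (e : frame) (a mu nu : 'I_d) (x : V) : R :=
  partial mu (e a nu) x - partial nu (e a mu) x.

Definition e_of_omega (om : spin_conn) : frame :=
  fun a mu x =>
    (a == mu)%:R +
    \int[lebesgue_measure]_(t in `[0%R, 1%R])
       (\sum_(b < d) om a b mu (t *: x) * t * coord x b).

Definition omega_of_e (e : frame) : spin_conn :=
  fun a b nu x =>
    2^-1 * ( - (\sum_(c < d) e c nu x *
                  (\sum_(mu < d) \sum_(rho < d)
                     edual e b rho x * edual e a mu x * dform e c mu rho x))
             + \sum_(mu < d) edual e b mu x * dform e a mu nu x
             - \sum_(mu < d) edual e a mu x * dform e b mu nu x).

(* (L_r sigma)_mu = (x^nu d_nu + 1) sigma_mu for a 1-form sigma;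
   here applied to e^b *)
Definition lie_r (e : frame) (b mu : 'I_d) (x : V) : R :=
  \sum_(nu < d) coord x nu * partial nu (e b mu) x + e b mu x.

Definition i_lie_r (e : frame) (a b : 'I_d) (x : V) : R :=
  \sum_(mu < d) edual e a mu x * lie_r e b mu x.

Definition space_i (om : spin_conn) : Prop :=
  (forall a b mu, smooth (om a b mu)) /\
  (forall a b mu x, om a b mu x = - om b a mu x) /\
  (forall a b x, \sum_(mu < d) coord x mu * om a b mu x = 0) /\
  is_vielbein (e_of_omega om) /\
  (forall a mu nu x,
     dform (e_of_omega om) a mu nu x +
     \sum_(b < d) (om a b mu x * e_of_omega om b nu x
                   - om a b nu x * e_of_omega om b mu x) = 0).

Definition space_ii (e : frame) : Prop :=
  is_vielbein e /\
  (forall a x, \sum_(mu < d) coord x mu * e a mu x = coord x a) /\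
  (forall mu x, \sum_(a < d) coord x a * e a mu x = coord x mu) /\
  (forall a b x, i_lie_r e a b x = i_lie_r e b a x).

End Fields.

From Pilot Require Import Defs.
From HB Require Import structures.
From mathcomp Require Import all_boot all_order all_algebra.
From mathcomp Require Import all_classical all_reals all_analysis.
From mathcomp Require Import perm ring lra.
Import Order.TTheory GRing.Theory Num.Theory.
Import numFieldNormedType.Exports.
Local Open Scope classical_set_scope.
Local Open Scope ring_scope.
Set Implicit Arguments. Unset Strict Implicit. Unset Printing Implicit Defensive.

(* The correspondence is pointwise linear algebra plus one radial integration.
   At a point, in the frame e^a_mu and its inverse, Cartan's equation
   de^a + omega^a_b /\ e^b = 0 with antisymmetric omega has the unique solution
   omega_of_e (a Koszul formula), and that formula is always antisymmetric and
   torsion free.  Contracted with the radial field, and using the gauge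
   x.omega = 0 together with x^mu e^a_mu = x^a, the torsion equation becomes
   L_r e^a_mu = delta^a_mu + omega^a_(b mu) x^b, that is
   d/dt [t (e^a_mu(tx) - delta^a_mu)] = omega^a_(b mu)(tx) t x^b, and
   integrating over [0, 1] gives e = e_of_omega omega.  Conversely the two
   contraction identities for e_of_omega omega come from the gauge and the
   antisymmetry of omega, while the symmetry of i_a L_r e^b is exactly what
   makes omega_of_e satisfy the gauge.  The chain rule along rays needs
   differentiability, which follows from continuity of the partial derivatives
   by the mean value theorem along coordinate staircases. *)

Section Smoothness.
Variables (R : realType) (d : nat).
Local Notation V := 'rV[R]_d.
Local Notation basis mu := (delta_mx ord0 mu : V).
Implicit Types (f g : V -> R) (n : nat).

Definition cont_derivable f :=
  continuous f /\ forall mu x, derivable f x (basis mu).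

Definition Cn n f := forall s : seq 'I_d, (size s <= n)%N ->
  cont_derivable (iter_partial s f).

Lemma iter_partial_rcons s mu f :
  iter_partial (rcons s mu) f = iter_partial s (partial mu f).
Proof. by elim: s => //= nu s ->. Qed.

Lemma CnE n f : Cn n f <->
  cont_derivable f /\ if n is k.+1 then forall mu, Cn k (partial mu f) else True.
Proof.
split=> [Cf|[Df Cf] s].
  split; first exact: (Cf [::]).
  case: n Cf => // k Cf mu s sk; rewrite -iter_partial_rcons.
  by apply: Cf; rewrite size_rcons.
case/lastP: s => [//|s mu]; rewrite size_rcons iter_partial_rcons.
by case: n Cf => // k Cf; rewrite ltnS; apply: Cf.
Qed.

Lemma Cn_le m n f : (m <= n)%N -> Cn n f -> Cn m f.
Proof. by move=> mn Cf s sm; apply: Cf; apply: leq_trans sm mn. Qed.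

Lemma smoothE f : smooth f <-> forall n, Cn n f.
Proof.
split=> [sf n s _|Cf s]; first exact: sf.
exact: (Cf (size s)).
Qed.

Lemma partial_cst (c : R) mu : partial mu (fun _ : V => c) = (fun _ => 0).
Proof. by apply/funext => x; rewrite /partial; exact: (derive_cst c). Qed.

Lemma partialD f g mu x : derivable f x (basis mu) -> derivable g x (basis mu) ->
  partial mu (fun y => f y + g y) x = partial mu f x + partial mu g x.
Proof. by move=> df dg; rewrite /partial -deriveD. Qed.

Lemma partialM f g mu x : derivable f x (basis mu) -> derivable g x (basis mu) ->
  partial mu (fun y => f y * g y) x = partial mu f x * g x + f x * partial mu g x.
Proof.
move=> df dg; rewrite /partial.
have -> : (fun y => f y * g y) = f * g by [].
by rewrite deriveM // addrC; congr (_ + _); exact: mulrC.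
Qed.

Lemma partialV f mu x : f x != 0 -> derivable f x (basis mu) ->
  partial mu (fun y => (f y)^-1) x = - ((f x)^-1 * ((f x)^-1 * partial mu f x)).
Proof. by move=> f0 df; rewrite /partial deriveV // mulrA -invfM -expr2; exact: mulNr. Qed.

Lemma cont_derivable_cst (c : R) : cont_derivable (fun _ : V => c).
Proof. by split=> [x|mu x]; [exact: cst_continuous|exact: derivable_cst]. Qed.

Lemma cont_derivableD f g : cont_derivable f -> cont_derivable g ->
  cont_derivable (fun x => f x + g x).
Proof.
move=> [cf df] [cg dg]; split=> [x|mu x]; first exact: continuousD (cf x) (cg x).
exact: derivableD.
Qed.

Lemma cont_derivableM f g : cont_derivable f -> cont_derivable g ->
  cont_derivable (fun x => f x * g x).
Proof.
move=> [cf df] [cg dg]; split=> [x|mu x]; first exact: continuousM (cf x) (cg x).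
exact: derivableM.
Qed.

Lemma cont_derivableV f : (forall x, f x != 0) -> cont_derivable f ->
  cont_derivable (fun x => (f x)^-1).
Proof.
move=> f0 [cf df]; split=> [x|mu x]; first exact: continuousV (f0 x) (cf x).
exact: derivableV.
Qed.

Lemma Cn_cst n (c : R) : Cn n (fun _ : V => c).
Proof.
elim: n c => [|n IH] c; apply/CnE; split=> //; first exact: cont_derivable_cst.
  exact: cont_derivable_cst.
by move=> mu; rewrite partial_cst.
Qed.

Lemma CnD n f g : Cn n f -> Cn n g -> Cn n (fun x => f x + g x).
Proof.
elim: n f g => [|n IH] f g /CnE[Df Cf] /CnE[Dg Cg]; apply/CnE.
  by split; first exact: cont_derivableD.
split=> [|mu]; first exact: cont_derivableD.
have -> : partial mu (fun x => f x + g x) =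
          (fun x => partial mu f x + partial mu g x).
  by apply/funext => x; rewrite partialD //; [apply: Df.2|apply: Dg.2].
exact: IH.
Qed.

Lemma CnM n f g : Cn n f -> Cn n g -> Cn n (fun x => f x * g x).
Proof.
elim: n f g => [|n IH] f g Cf Cg.
  move: Cf Cg => /CnE[Df _] /CnE[Dg _]; apply/CnE.
  by split; first exact: cont_derivableM.
have Cf' := Cn_le (leqnSn n) Cf; have Cg' := Cn_le (leqnSn n) Cg.
move: Cf Cg => /CnE[Df Cf] /CnE[Dg Cg]; apply/CnE.
split=> [|mu]; first exact: cont_derivableM.
have -> : partial mu (fun x => f x * g x) =
          (fun x => partial mu f x * g x + f x * partial mu g x).
  by apply/funext => x; rewrite partialM //; [apply: Df.2|apply: Dg.2].
by apply: CnD; apply: IH; [exact: Cf|exact: Cg'|exact: Cf'|exact: Cg].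
Qed.

Lemma CnV n f : (forall x, f x != 0) -> Cn n f -> Cn n (fun x => (f x)^-1).
Proof.
move=> f0; elim: n f f0 => [|n IH] f f0 Cf.
  move: Cf => /CnE[Df _]; apply/CnE.
  by split; first exact: cont_derivableV.
have Cf' := Cn_le (leqnSn n) Cf.
move: Cf => /CnE[Df Cf]; apply/CnE.
split=> [|mu]; first exact: cont_derivableV.
have -> : partial mu (fun x => (f x)^-1) =
          (fun x => (-1) * ((f x)^-1 * ((f x)^-1 * partial mu f x))).
  by apply/funext => x; rewrite partialV // ?mulN1r //; apply: Df.2.
apply: CnM; first exact: Cn_cst.
by apply: CnM; [exact: IH|apply: CnM; [exact: IH|exact: Cf]].
Qed.

Lemma Cn_sum n (I : Type) (r : seq I) (P : pred I) (F : I -> V -> R) :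
  (forall i, P i -> Cn n (F i)) -> Cn n (fun x => \sum_(i <- r | P i) F i x).
Proof.
move=> CF; rewrite -[X in Cn n X]fct_sumE.
by elim/big_ind: _; [exact: Cn_cst|exact: CnD|exact: CF].
Qed.

Lemma Cn_prod n (I : Type) (r : seq I) (P : pred I) (F : I -> V -> R) :
  (forall i, P i -> Cn n (F i)) -> Cn n (fun x => \prod_(i <- r | P i) F i x).
Proof.
move=> CF; rewrite -[X in Cn n X]fct_prodE.
by elim/big_ind: _; [exact: Cn_cst|exact: CnM|exact: CF].
Qed.

Lemma Cn_det n m (A : 'I_m -> 'I_m -> V -> R) :
  (forall i j, Cn n (A i j)) -> Cn n (fun x => \det (\matrix_(i, j) A i j x)).
Proof.
move=> CA.
have -> : (fun x => \det (\matrix_(i, j) A i j x)) =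
          (fun x => \sum_(s : 'S_m) (-1) ^+ s * \prod_i A i (s i) x).
  apply/funext => x; rewrite /determinant; apply: eq_bigr => s _.
  by congr (_ * _); apply: eq_bigr => i _; rewrite mxE.
apply: Cn_sum => s _; apply: CnM; first exact: Cn_cst.
exact: Cn_prod.
Qed.

Lemma smooth_cont_derivable f : smooth f -> cont_derivable f.
Proof. by move=> /(_ [::]). Qed.

Lemma smooth_partial f mu : smooth f -> smooth (partial mu f).
Proof.
move/smoothE => Cf; apply/smoothE => n.
by have /CnE[_] := Cf n.+1; apply.
Qed.

Lemma smooth_cst (c : R) : smooth (fun _ : V => c).
Proof. by apply/smoothE => n; exact: Cn_cst. Qed.

Lemma smoothD f g : smooth f -> smooth g -> smooth (fun x => f x + g x).
Proof. by move=> /smoothE Cf /smoothE Cg; apply/smoothE => n; exact: CnD. Qed.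

Lemma smoothM f g : smooth f -> smooth g -> smooth (fun x => f x * g x).
Proof. by move=> /smoothE Cf /smoothE Cg; apply/smoothE => n; exact: CnM. Qed.

Lemma smoothN f : smooth f -> smooth (fun x => - f x).
Proof.
move=> sf; have -> : (fun x => - f x) = (fun x => -1 * f x).
  by apply/funext => x; rewrite mulN1r.
by apply: smoothM => //; exact: smooth_cst.
Qed.

Lemma smoothB f g : smooth f -> smooth g -> smooth (fun x => f x - g x).
Proof. by move=> sf sg; apply: smoothD => //; exact: smoothN. Qed.

Lemma smooth_sum (I : Type) (r : seq I) (P : pred I) (F : I -> V -> R) :
  (forall i, P i -> smooth (F i)) -> smooth (fun x => \sum_(i <- r | P i) F i x).
Proof.
move=> sF; apply/smoothE => n; apply: Cn_sum => i Pi.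
by move/smoothE: (sF i Pi).
Qed.

Lemma smooth_edual (e : frame R d) a mu :
  is_vielbein e -> smooth (edual e a mu).
Proof.
case=> se ue; have Ce n i j : Cn n (e i j) by move/smoothE: (se i j).
have -> : edual e a mu = fun x => (\det (emx e x))^-1 *
    ((-1) ^+ (a + mu) * \det (\matrix_(i, j) e (lift a i) (lift mu j) x)).
  apply/funext => x; rewrite /edual /invmx ue mxE /adjugate mxE /cofactor.
  by congr (_ * (_ * _)); congr (\det _); apply/matrixP => i j; rewrite !mxE.
apply/smoothE => n; apply: CnM; last first.
  by apply: CnM; [exact: Cn_cst|apply: Cn_det => i j; exact: Ce].
apply: CnV => [x|]; first by rewrite -unitfE -unitmxE.
by apply: Cn_det => i j; exact: Ce.
Qed.

End Smoothness.

Section Derivatives.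
Variables (R : realType) (d : nat).
Local Notation V := 'rV[R]_d.
Local Notation basis mu := (delta_mx ord0 mu : V).
Local Notation coord := (@Defs.coord R d).
Implicit Types (f : V -> R) (x y v : V).

Lemma coordZ (t : R) x nu : coord (t *: x) nu = t * coord x nu.
Proof. by rewrite /Defs.coord mxE. Qed.

Lemma is_derive_coord x v nu : is_derive x v (coord^~ nu) (coord v nu).
Proof.
have Dq : (fun h : R => h^-1 *: ((coord^~ nu \o shift x) (h *: v) - coord x nu))
    @ 0^' --> coord v nu.
  apply: cvg_near_cst; rewrite near_withinE; near=> h => h0.
  by rewrite /= /Defs.coord !mxE addrK; exact: mulKf.
by apply: DeriveDef; [apply/cvgP: Dq|apply: cvg_lim Dq].
Unshelve. all: by end_near. Qed.

Lemma derivable_coord x v nu : derivable (coord^~ nu) x v.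
Proof. by case: (is_derive_coord x v nu). Qed.

Lemma partial_coord mu nu x : partial mu (coord^~ nu) x = (mu == nu)%:R.
Proof.
rewrite /partial; have [_ ->] := is_derive_coord x (basis mu) nu.
by rewrite /Defs.coord mxE eq_sym.
Qed.

Lemma is_derive_line f (p w : V) (s : R) :
  derivable f (p + s *: w) w ->
  is_derive s 1 (fun t : R => f (p + t *: w)) ('D_w f (p + s *: w)).
Proof.
move=> df.
have E : (fun h : R => h^-1 *: (((fun t => f (p + t *: w)) \o shift s) (h *: 1)
              - f (p + s *: w))) =
         (fun h : R => h^-1 *: ((f \o shift (p + s *: w)) (h *: w) - f (p + s *: w))).
  apply/funext => h /=; congr (_ *: (f _ - _)).
  by rewrite [h *: 1]mulr1 scalerDl addrCA addrC.
by apply: DeriveDef; [rewrite /derivable E|rewrite /derive E].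
Qed.

Lemma partial_mvt f (p : V) k (c : R) :
  (forall x, derivable f x (basis k)) ->
  exists2 c', `|c'| <= `|c| &
    f (p + c *: basis k) - f p = c * partial k f (p + c' *: basis k).
Proof.
move=> df; pose g t := f (p + t *: basis k).
have Dg (t : R) : is_derive t 1 g (partial k f (p + t *: basis k)).
  exact: is_derive_line.
have Cg : continuous g.
  move=> t; have [Dgt _] := Dg t.
  exact/differentiable_continuous/derivable1_diffP.
have -> : f p = g 0 by rewrite /g scale0r addr0.
have [c0|c0] := leP 0 c.
  have [c' + E] := MVT_segment c0 (fun t _ => Dg t) (continuous_subspaceT Cg).
  rewrite in_itv /= => /andP[c'0 c'c]; exists c'; last by rewrite E subr0 mulrC.
  by rewrite (ger0_norm c'0) (ger0_norm c0).
have [c' + E] := MVT_segment (ltW c0) (fun t _ => Dg t) (continuous_subspaceT Cg).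
rewrite in_itv /= => /andP[cc' c'0]; exists c'; last first.
  by rewrite -opprB E sub0r mulrN opprK mulrC.
by rewrite (ler0_norm c'0) (ler0_norm (ltW c0)) lerN2.
Qed.

(* Consecutive points [y + h *: stair v k] differ along the single axis k,
   where the one-variable mean value theorem applies. *)
Definition stair (v : V) (k : nat) : V :=
  \row_j (if (j < k)%N then coord v j else 0).

Lemma stair0 v : stair v 0 = 0.
Proof. by apply/matrixP => i j; rewrite !mxE. Qed.

Lemma stair_full v : stair v d = v.
Proof. by apply/matrixP => i j; rewrite !mxE ltn_ord (ord1 i). Qed.

Lemma stairS v (k : 'I_d) : stair v k.+1 = stair v k + coord v k *: basis k.
Proof.
apply/matrixP => i j; rewrite !mxE (ord1 i) eqxx /= ltnS leq_eqVlt.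
have [->|jk] := eqVneq j k; first by rewrite eqxx ltnn mulr1 add0r.
by rewrite (negbTE (jk : nat_of_ord j != k)) mulr0 addr0.
Qed.

Lemma stair_step_estimate f y v (h r ep : R) (k : 'I_d) :
  (forall x, derivable f x (basis k)) -> h != 0 ->
  (forall j, `|h * coord v j| < r) ->
  (forall z, ball y r z -> `|partial k f y - partial k f z| < ep) ->
  `|coord v k * partial k f y -
    h^-1 *: (f (y + h *: stair v k.+1) - f (y + h *: stair v k))|
  <= `|coord v k| * ep.
Proof.
move=> df h0 hv near_y.
have r0 : 0 < r := le_lt_trans (normr_ge0 _) (hv k).
set p := y + h *: stair v k.
have -> : y + h *: stair v k.+1 = p + (h * coord v k) *: basis k.
  by rewrite stairS scalerDr scalerA addrA.
have [c ck ->] := partial_mvt p (h * coord v k) df.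
rewrite [_ *: _]mulrA mulrA mulVf // mul1r -mulrBr normrM ler_wpM2l // ltW //.
apply: near_y; split => // i j; rewrite /ball /= !mxE (ord1 i) eqxx /=.
rewrite -addrA opprD addrA subrr sub0r normrN.
have [->|jk] := eqVneq j k; first by rewrite ltnn mulr0 add0r mulr1; exact: le_lt_trans ck (hv k).
rewrite mulr0 addr0; case: ltnP => _; first exact: hv.
by rewrite mulr0 normr0.
Qed.

Lemma is_derive_C1 f y v :
  (forall mu x, derivable f x (basis mu)) ->
  (forall mu, continuous (partial mu f)) ->
  is_derive y v f (\sum_nu coord v nu * partial nu f y).
Proof.
move=> df cf; set L := \sum_nu _.
suff Dq : (fun h : R => h^-1 *: ((f \o shift y) (h *: v) - f y)) @ 0^' --> L.
  by apply: DeriveDef; [apply/cvgP: Dq|apply: cvg_lim Dq].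
apply/cvgrPdist_lt => e e0.
pose S := \sum_nu `|coord v nu| + 1.
have S0 : 0 < S by rewrite ltr_wpDl ?sumr_ge0.
have vS j : `|coord v j| <= S.
  by rewrite /S (bigD1 j) //= -addrA lerDl addr_ge0 ?sumr_ge0.
have eS : 0 < e / S by rewrite divr_gt0.
have /nbhs_ballP[r r0 near_y] :
    \forall z \near y, forall nu, `|partial nu f y - partial nu f z| < e / S.
  have near_nu nu : \forall z \near y, `|partial nu f y - partial nu f z| < e / S.
    by apply: (cvgrPdist_lt _ _).1 (cf nu y) _ eS.
  exact: filter_forall near_nu.
rewrite near_withinE; apply/nbhs_ballP; exists (r / S) => /=; first by rewrite divr_gt0.
move=> h; rewrite /ball /= sub0r normrN => hS h0.
have hv j : `|h * coord v j| < r.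
  rewrite normrM; apply: le_lt_trans (ler_wpM2l (normr_ge0 h) (vS j)) _.
  by rewrite -ltr_pdivlMr.
have -> : f (h *: v + y) - f y =
    \sum_(k < d) (f (y + h *: stair v k.+1) - f (y + h *: stair v k)).
  transitivity (f (y + h *: stair v d) - f (y + h *: stair v 0)).
    by rewrite stair_full stair0 scaler0 addr0 [h *: v + y]addrC.
  by rewrite -(telescope_sumr (fun k => f (y + h *: stair v k)) (leq0n d)) big_mkord.
rewrite scaler_sumr /L -sumrB.
apply: le_lt_trans (ler_norm_sum _ _ _) _.
apply: (@le_lt_trans _ _ (\sum_(k < d) `|coord v k| * (e / S))).
  by apply: ler_sum => k _; apply: stair_step_estimate => // z /near_y.
by rewrite -mulr_suml mulrA ltr_pdivrMr // mulrC ltr_pM2l // ltrDl.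
Qed.

End Derivatives.

Section Kronecker.
Variables (R : pzSemiRingType) (d : nat).

Lemma sum_deltaL (F : 'I_d -> R) j : \sum_i (i == j)%:R * F i = F j.
Proof.
rewrite (bigD1 j) //= eqxx mul1r big1 ?addr0 // => i /negbTE ->; exact: mul0r.
Qed.

Lemma sum_deltaR (F : 'I_d -> R) j : \sum_i F i * (i == j)%:R = F j.
Proof.
rewrite (bigD1 j) //= eqxx mulr1 big1 ?addr0 // => i /negbTE ->; exact: mulr0.
Qed.

End Kronecker.

(* At a fixed point: [m a mu] is e^a_mu, [E mu a] is the dual e_a^mu and
   [D c mu rho] is (de^c)_(mu rho), so that [koszul m E D] is omega_of_e. *)
Section FrameAlgebra.
Variables (R : realFieldType) (d : nat) (m E : 'I_d -> 'I_d -> R).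
Hypothesis mE : forall a b, \sum_mu m a mu * E mu b = (a == b)%:R.
Hypothesis Em : forall mu nu, \sum_a E mu a * m a nu = (mu == nu)%:R.
Implicit Types (D W : 'I_d -> 'I_d -> 'I_d -> R).

Lemma coframe_frameK (W : 'I_d -> R) nu :
  \sum_c m c nu * (\sum_mu E mu c * W mu) = W nu.
Proof.
transitivity (\sum_mu (\sum_c E mu c * m c nu) * W mu); last first.
  by under eq_bigr do rewrite Em; exact: sum_deltaL.
under eq_bigr do rewrite mulr_sumr; rewrite exchange_big /=.
by apply: eq_bigr => mu _; rewrite mulr_suml; apply: eq_bigr => c _; ring.
Qed.

Lemma frame_coframeK (w : 'I_d -> R) p :
  \sum_mu E mu p * (\sum_c m c mu * w c) = w p.
Proof.
transitivity (\sum_c (\sum_mu m c mu * E mu p) * w c); last first.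
  by under eq_bigr do rewrite mE; exact: sum_deltaL.
under eq_bigr do rewrite mulr_sumr; rewrite exchange_big /=.
by apply: eq_bigr => c _; rewrite mulr_suml; apply: eq_bigr => mu _; ring.
Qed.

Lemma frame_eq0 (W : 'I_d -> R) :
  (forall c, \sum_mu E mu c * W mu = 0) -> forall nu, W nu = 0.
Proof. by move=> W0 nu; rewrite -coframe_frameK big1 // => c _; rewrite W0 mulr0. Qed.

Lemma frame2_eq0 (X : 'I_d -> 'I_d -> R) :
  (forall p q, \sum_mu \sum_nu E mu p * E nu q * X mu nu = 0) ->
  forall mu nu, X mu nu = 0.
Proof.
move=> X0 mu nu; move: mu; apply: frame_eq0 => p; move: nu.
apply: frame_eq0 => q; rewrite -[RHS](X0 p q) exchange_big /=.
by apply: eq_bigr => nu _; rewrite mulr_sumr; apply: eq_bigr => mu _; ring.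
Qed.

Definition frame2 D c p q := \sum_mu \sum_rho E mu p * E rho q * D c mu rho.

Definition koszul D a b nu :=
  2^-1 * ( - (\sum_c m c nu * (\sum_mu \sum_rho E rho b * E mu a * D c mu rho))
           + \sum_mu E mu b * D a mu nu
           - \sum_mu E mu a * D b mu nu).

Definition koszul_frame D a b c :=
  2^-1 * (- frame2 D c a b + frame2 D a b c - frame2 D b a c).

Definition torsion D W a mu nu :=
  D a mu nu + \sum_b (W a b mu * m b nu - W a b nu * m b mu).

Definition conn_frame W a b c := \sum_mu E mu c * W a b mu.

Lemma contract_frame2 D a b c :
  \sum_mu E mu b * D a mu c = \sum_c' m c' c * frame2 D a b c'.
Proof.
rewrite -(coframe_frameK (fun nu => \sum_mu E mu b * D a mu nu) c).
apply: eq_bigr => c' _; congr (_ * _).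
rewrite /frame2 exchange_big /=; apply: eq_bigr => rho _; rewrite mulr_sumr.
by apply: eq_bigr => mu _; ring.
Qed.

Lemma koszulE D a b nu : koszul D a b nu = \sum_c m c nu * koszul_frame D a b c.
Proof.
have E2 c : \sum_mu \sum_rho E rho b * E mu a * D c mu rho = frame2 D c a b.
  by apply: eq_bigr => mu _; apply: eq_bigr => rho _; ring.
rewrite /koszul (contract_frame2 D a b nu) (contract_frame2 D b a nu).
under eq_bigr do rewrite E2.
rewrite -sumrN -big_split /= -sumrB mulr_sumr; apply: eq_bigr => c _.
by rewrite /koszul_frame; ring.
Qed.

Lemma frame2_sum_prod (F G : 'I_d -> 'I_d -> R) p q :
  \sum_mu \sum_nu E mu p * E nu q * (\sum_b F b mu * G b nu) =
  \sum_b (\sum_mu E mu p * F b mu) * (\sum_nu E nu q * G b nu).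
Proof.
under [RHS]eq_bigr do rewrite mulr_suml; rewrite [RHS]exchange_big /=.
apply: eq_bigr => mu _; under [RHS]eq_bigr do rewrite mulr_sumr.
rewrite [RHS]exchange_big /=; apply: eq_bigr => nu _.
by rewrite mulr_sumr; apply: eq_bigr => b _; ring.
Qed.

Lemma torsion_frame D W a p q :
  \sum_mu \sum_nu E mu p * E nu q * torsion D W a mu nu =
  frame2 D a p q + conn_frame W a q p - conn_frame W a p q.
Proof.
have Em' b q' : \sum_nu E nu q' * m b nu = (b == q')%:R.
  by rewrite -mE; apply: eq_bigr => nu _; rewrite mulrC.
transitivity (frame2 D a p q
    + \sum_mu \sum_nu E mu p * E nu q * (\sum_b W a b mu * m b nu)
    - \sum_mu \sum_nu E mu p * E nu q * (\sum_b m b mu * W a b nu)).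
  rewrite /frame2 -big_split /= -sumrB; apply: eq_bigr => mu _.
  rewrite -big_split /= -sumrB; apply: eq_bigr => nu _.
  rewrite /torsion sumrB.
  under [X in _ = _ - _ * X]eq_bigr do rewrite mulrC.
  by ring.
rewrite !frame2_sum_prod; congr (_ + _ - _).
  by under eq_bigr do rewrite Em'; exact: sum_deltaR.
by under eq_bigr do rewrite Em'; exact: sum_deltaL.
Qed.

Lemma frame2_torsion_free D W :
  (forall a mu nu, torsion D W a mu nu = 0) ->
  forall a p q, frame2 D a p q = conn_frame W a p q - conn_frame W a q p.
Proof.
move=> T0 a p q; have := torsion_frame D W a p q.
rewrite big1 => [|mu _]; first lra.
by rewrite big1 // => nu _; rewrite T0 mulr0.
Qed.

Lemma koszul_unique D W :
  (forall a b nu, W a b nu = - W b a nu) ->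
  (forall a mu nu, torsion D W a mu nu = 0) ->
  forall a b nu, koszul D a b nu = W a b nu.
Proof.
move=> Wanti T0 a b nu.
rewrite koszulE -(coframe_frameK (W a b) nu); apply: eq_bigr => c _; congr (_ * _).
have conn_anti a' b' c' : conn_frame W a' b' c' = - conn_frame W b' a' c'.
  by rewrite /conn_frame -sumrN; apply: eq_bigr => mu _; rewrite Wanti mulrN.
rewrite /koszul_frame !(frame2_torsion_free T0).
rewrite (conn_anti c a b) (conn_anti c b a) (conn_anti b a c) -/(conn_frame W a b c).
by field.
Qed.

Lemma frame2_antisym D : (forall c mu rho, D c mu rho = - D c rho mu) ->
  forall a p q, frame2 D a p q = - frame2 D a q p.
Proof.
move=> Danti a p q; rewrite /frame2 exchange_big /= -sumrN; apply: eq_bigr => mu _.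
by rewrite -sumrN; apply: eq_bigr => rho _; rewrite Danti; ring.
Qed.

Lemma koszul_torsion_free D : (forall c mu rho, D c mu rho = - D c rho mu) ->
  forall a mu nu, torsion D (koszul D) a mu nu = 0.
Proof.
move=> Danti a; apply: frame2_eq0 => p q; rewrite torsion_frame.
have connK a' b' c' : conn_frame (koszul D) a' b' c' = koszul_frame D a' b' c'.
  by rewrite /conn_frame; under eq_bigr do rewrite koszulE; rewrite frame_coframeK.
by rewrite !connK /koszul_frame (frame2_antisym Danti a q p); field.
Qed.

Lemma koszul_antisym D : (forall c mu rho, D c mu rho = - D c rho mu) ->
  forall a b nu, koszul D a b nu = - koszul D b a nu.
Proof.
move=> Danti a b nu; rewrite !koszulE -sumrN; apply: eq_bigr => c _.
by rewrite /koszul_frame (frame2_antisym Danti c a b); ring.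
Qed.

Lemma frame2_skew p q :
  \sum_mu \sum_rho E mu p * E rho q * (m rho mu - m mu rho) = E p q - E q p.
Proof.
transitivity (\sum_mu \sum_rho E rho q * (m rho mu * E mu p)
              - \sum_mu E mu p * (\sum_rho m mu rho * E rho q)).
  rewrite -sumrB; apply: eq_bigr => mu _; rewrite mulr_sumr -sumrB.
  by apply: eq_bigr => rho _; ring.
rewrite exchange_big /=; under eq_bigr do rewrite -mulr_sumr mE.
by under [X in _ - X]eq_bigr do rewrite mE; rewrite !sum_deltaR.
Qed.

Lemma sum_contract3 (Y : 'I_d -> R) (A : 'I_d -> 'I_d -> R) D :
  \sum_c Y c * (\sum_mu \sum_rho A mu rho * D c mu rho) =
  \sum_mu \sum_rho A mu rho * (\sum_c Y c * D c mu rho).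
Proof.
under eq_bigr do rewrite mulr_sumr.
rewrite exchange_big /=; apply: eq_bigr => mu _.
under eq_bigr do rewrite mulr_sumr.
rewrite exchange_big /=; apply: eq_bigr => rho _.
by rewrite mulr_sumr; apply: eq_bigr => c _; ring.
Qed.

(* [Y] is the position x of the point and [Lam b mu] stands for (L_r e^b)_mu. *)
Section RadialContraction.
Variables (Y : 'I_d -> R) (D W : 'I_d -> 'I_d -> 'I_d -> R).
Hypothesis Ym : forall a, \sum_mu Y mu * m a mu = Y a.
Hypothesis YD : forall mu rho, \sum_c Y c * D c mu rho = m rho mu - m mu rho.

Lemma koszul_gauge (Lam : 'I_d -> 'I_d -> R) :
  (forall a mu, \sum_rho Y rho * D a mu rho = (a == mu)%:R - Lam a mu) ->
  (forall a b, \sum_mu E mu a * Lam b mu = \sum_mu E mu b * Lam a mu) ->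
  forall a b, \sum_nu Y nu * koszul D a b nu = 0.
Proof.
move=> YDa Lam_sym a b.
have first_term : \sum_nu Y nu * (\sum_c m c nu *
      (\sum_mu \sum_rho E rho b * E mu a * D c mu rho)) = E a b - E b a.
  transitivity (\sum_c (\sum_nu Y nu * m c nu) *
      (\sum_mu \sum_rho E rho b * E mu a * D c mu rho)).
    under eq_bigr do rewrite mulr_sumr.
    rewrite exchange_big /=; apply: eq_bigr => c _.
    by rewrite mulr_suml; apply: eq_bigr => nu _; ring.
  under eq_bigr do rewrite Ym.
  rewrite sum_contract3 -frame2_skew; apply: eq_bigr => mu _.
  by apply: eq_bigr => rho _; rewrite YD [E rho b * _]mulrC.
have other_terms a' b' : \sum_nu Y nu * (\sum_mu E mu b' * D a' mu nu) =
    E a' b' - \sum_mu E mu b' * Lam a' mu.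
  transitivity (\sum_mu E mu b' * (\sum_nu Y nu * D a' mu nu)).
    under eq_bigr do rewrite mulr_sumr.
    rewrite exchange_big /=; apply: eq_bigr => mu _.
    by rewrite mulr_sumr; apply: eq_bigr => nu _; ring.
  under eq_bigr do rewrite YDa mulrBr.
  by rewrite sumrB; under eq_bigr do rewrite eq_sym; rewrite sum_deltaR.
transitivity (2^-1 * (- (\sum_nu Y nu * (\sum_c m c nu *
      (\sum_mu \sum_rho E rho b * E mu a * D c mu rho)))
   + \sum_nu Y nu * (\sum_mu E mu b * D a mu nu)
   - \sum_nu Y nu * (\sum_mu E mu a * D b mu nu))).
  rewrite -sumrN -big_split /= -sumrB mulr_sumr.
  by apply: eq_bigr => nu _; rewrite /koszul; ring.
by rewrite first_term !other_terms Lam_sym; ring.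
Qed.

Hypothesis T0 : forall a mu nu, torsion D W a mu nu = 0.

Lemma contract_torsion_free :
  (forall a b, \sum_nu Y nu * W a b nu = 0) ->
  forall a mu, \sum_nu Y nu * D a nu mu = \sum_b W a b mu * Y b.
Proof.
move=> YW a mu.
have D_W nu : D a nu mu = \sum_b (W a b mu * m b nu - W a b nu * m b mu).
  have /eqP := T0 a nu mu; rewrite addr_eq0 => /eqP ->.
  by rewrite -sumrN; apply: eq_bigr => b _; ring.
under eq_bigr do rewrite D_W mulr_sumr.
rewrite exchange_big /=; apply: eq_bigr => b _.
transitivity (W a b mu * (\sum_nu Y nu * m b nu) - m b mu * (\sum_nu Y nu * W a b nu)).
  by rewrite !mulr_sumr -sumrB; apply: eq_bigr => nu _; ring.
by rewrite Ym YW mulr0 subr0.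
Qed.

Lemma lie_frame_sym (Lam : 'I_d -> 'I_d -> R) :
  (forall a b nu, W a b nu = - W b a nu) ->
  (forall b mu, Lam b mu = (b == mu)%:R + \sum_c W b c mu * Y c) ->
  forall a b, \sum_mu E mu a * Lam b mu = \sum_mu E mu b * Lam a mu.
Proof.
move=> Wanti LamE a b.
have frame_Lam a' b' :
    \sum_mu E mu a' * Lam b' mu = E b' a' + \sum_c Y c * conn_frame W b' c a'.
  under eq_bigr do rewrite LamE mulrDr.
  rewrite big_split /=; congr (_ + _).
    by under eq_bigr do rewrite eq_sym; rewrite sum_deltaR.
  under eq_bigr do rewrite mulr_sumr.
  rewrite exchange_big /=; apply: eq_bigr => c _; rewrite /conn_frame mulr_sumr.
  by apply: eq_bigr => mu _; ring.
have conn_anti a' b' c' : conn_frame W a' b' c' = - conn_frame W b' a' c'.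
  by rewrite /conn_frame -sumrN; apply: eq_bigr => mu _; rewrite Wanti mulrN.
have skew p q : \sum_c Y c * (conn_frame W c p q - conn_frame W c q p) = E p q - E q p.
  rewrite -frame2_skew; under eq_bigr do rewrite -(frame2_torsion_free T0).
  rewrite /frame2 sum_contract3; apply: eq_bigr => mu _; apply: eq_bigr => rho _.
  by rewrite YD.
have : \sum_c Y c * conn_frame W b c a - \sum_c Y c * conn_frame W a c b = E a b - E b a.
  rewrite -skew -sumrB; apply: eq_bigr => c _.
  by rewrite (conn_anti c a b) (conn_anti c b a); ring.
rewrite !frame_Lam; lra.
Qed.

End RadialContraction.

End FrameAlgebra.

Lemma sum_quad_antisym (R : realFieldType) (d : nat) (Y : 'I_d -> R)
    (W : 'I_d -> 'I_d -> R) :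
  (forall a b, W a b = - W b a) -> \sum_a \sum_b Y a * Y b * W a b = 0.
Proof.
move=> Wanti.
have : \sum_a \sum_b Y a * Y b * W a b = - \sum_a \sum_b Y a * Y b * W a b.
  rewrite {1}exchange_big /= -sumrN; apply: eq_bigr => a _.
  by rewrite -sumrN; apply: eq_bigr => b _; rewrite Wanti; ring.
lra.
Qed.

Section CoordinateIdentities.
Variables (R : realType) (d : nat).
Local Notation V := 'rV[R]_d.
Local Notation basis mu := (delta_mx ord0 mu : V).
Local Notation coord := (@Defs.coord R d).

Lemma partial_sum (F : 'I_d -> V -> R) mu y :
  (forall nu, derivable (F nu) y (basis mu)) ->
  partial mu (fun z => \sum_nu F nu z) y = \sum_nu partial mu (F nu) y.
Proof.
move=> dF; have -> : (fun z => \sum_nu F nu z) = \sum_nu F nu by rewrite fct_sumE.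
exact: derive_sum.
Qed.

Lemma partial_contract_coord (g : 'I_d -> V -> R) a :
  (forall nu mu y, derivable (g nu) y (basis mu)) ->
  (forall y, \sum_nu coord y nu * g nu y = coord y a) ->
  forall mu y, g mu y + \sum_nu coord y nu * partial mu (g nu) y = (mu == a)%:R.
Proof.
move=> dg gE mu y.
have := congr1 (fun F => partial mu F y) (funext gE).
rewrite /= partial_sum => [|nu]; last first.
  by apply: derivableM; [exact: derivable_coord|exact: dg].
rewrite partial_coord => <-.
under [RHS]eq_bigr => nu _ do
  rewrite [partial mu _ y](partialM (derivable_coord (nu := nu)) (dg nu mu y)) partial_coord.
rewrite big_split /=; congr (_ + _).
by under eq_bigr do rewrite eq_sym; rewrite sum_deltaL.
Qed.

Section Vielbein.
Variable e : frame R d.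
Hypothesis de : forall a nu mu y, derivable (e a nu) y (basis mu).

Lemma lie_r_dform :
  (forall a y, \sum_nu coord y nu * e a nu y = coord y a) ->
  forall a mu y, lie_r e a mu y = (a == mu)%:R + \sum_nu coord y nu * dform e a nu mu y.
Proof.
move=> xe a mu y.
have := partial_contract_coord (@de a) (xe a) mu y; rewrite eq_sym => <-.
rewrite /lie_r /dform; under [X in _ = _ + X]eq_bigr do rewrite mulrBr.
rewrite sumrB; ring.
Qed.

Lemma contract_dform :
  (forall mu y, \sum_a coord y a * e a mu y = coord y mu) ->
  forall mu rho y, \sum_c coord y c * dform e c mu rho y = e rho mu y - e mu rho y.
Proof.
move=> ex mu rho y.
have := partial_contract_coord (fun c => @de c rho) (ex rho) mu y.
have := partial_contract_coord (fun c => @de c mu) (ex mu) rho y.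
rewrite [rho == mu]eq_sym => E_mu E_rho.
rewrite /dform; under eq_bigr do rewrite mulrBr.
rewrite sumrB; lra.
Qed.

End Vielbein.

Lemma emx_edual (e : frame R d) x : emx e x \in unitmx ->
  forall a b, \sum_mu e a mu x * edual e b mu x = (a == b)%:R.
Proof.
move=> u a b; have := congr1 (fun M : 'M[R]_d => M a b) (mulmxV u).
by rewrite !mxE => <-; apply: eq_bigr => mu _; rewrite /edual mxE.
Qed.

Lemma edual_emx (e : frame R d) x : emx e x \in unitmx ->
  forall mu nu, \sum_a edual e a mu x * e a nu x = (mu == nu)%:R.
Proof.
move=> u mu nu; have := congr1 (fun M : 'M[R]_d => M mu nu) (mulVmx u).
by rewrite !mxE => <-; apply: eq_bigr => a _; rewrite /edual mxE.
Qed.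

End CoordinateIdentities.

Section RadialIntegral.
Variables (R : realType) (d : nat).
Local Notation V := 'rV[R]_d.
Local Notation coord := (@Defs.coord R d).

Lemma continuous_sumr (I : Type) (r : seq I) (P : pred I) (G : I -> R -> R) :
  (forall i, continuous (G i)) -> continuous (fun t => \sum_(i <- r | P i) G i t).
Proof.
move=> cG; rewrite -[X in continuous X]fct_sumE.
elim/big_ind: _ => [|f g cf cg t|//]; first exact: cst_continuous.
exact: continuousD (cf t) (cg t).
Qed.

Lemma continuous_integrand (om : spin_conn R d) a mu (x : V) :
  (forall b, continuous (om a b mu)) ->
  continuous (fun t : R => \sum_b om a b mu (t *: x) * t * coord x b).
Proof.
move=> com; apply: continuous_sumr => b t.
have cline : {for t, continuous (fun s : R => om a b mu (s *: x))}.
  by apply: (@continuous_comp _ _ _ (fun s : R => s *: x));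
    [exact: scalel_continuous|exact: com].
have cid : {for t, continuous (fun s : R => s)} by exact: cvg_id.
have cprod := continuousM (continuousM cline cid) (@cst_continuous _ _ (coord x b) t).
exact: cprod.
Qed.

Lemma integrable01 (g : R -> R) : continuous g ->
  (@lebesgue_measure R).-integrable `[0%R, 1%R] (EFin \o g).
Proof.
move=> cg; apply: continuous_compact_integrable; first exact: segment_compact.
exact: continuous_subspaceT.
Qed.

Lemma sum_Rintegral01 (I : Type) (r : seq I) (P : pred I) (c : I -> R)
    (G : I -> R -> R) : (forall i, continuous (G i)) ->
  \sum_(i <- r | P i) c i * \int[lebesgue_measure]_(t in `[0%R, 1%R]) G i t =
  \int[lebesgue_measure]_(t in `[0%R, 1%R]) \sum_(i <- r | P i) c i * G i t.
Proof.
move=> cG; elim: r => [|i r IH].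
  rewrite big_nil; under eq_Rintegral do rewrite big_nil.
  by rewrite Rintegral_cst ?mul0r //; exact: measurable_itv.
rewrite big_cons; under [RHS]eq_Rintegral do rewrite big_cons.
case: (P i) => //; rewrite RintegralD; first last.
- apply/integrable01/continuous_sumr => j t.
  by have := continuousM (@cst_continuous _ _ (c j) t) (cG j t).
- apply: integrable01 => t.
  by have := continuousM (@cst_continuous _ _ (c i) t) (cG i t).
- exact: measurable_itv.
by rewrite IH RintegralZl //; exact: integrable01.
Qed.

Lemma sum_Rintegral01_eq0 (I : Type) (r : seq I) (P : pred I) (c : I -> R)
    (G : I -> R -> R) : (forall i, continuous (G i)) ->
  (forall t, \sum_(i <- r | P i) c i * G i t = 0) ->
  \sum_(i <- r | P i) c i * \int[lebesgue_measure]_(t in `[0%R, 1%R]) G i t = 0.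
Proof.
move=> cG G0; rewrite sum_Rintegral01 //; under eq_Rintegral do rewrite G0.
by rewrite Rintegral_cst ?mul0r //; exact: measurable_itv.
Qed.

End RadialIntegral.

Section Correspondence.
Variables (R : realType) (d : nat).
Local Notation V := 'rV[R]_d.
Local Notation basis mu := (delta_mx ord0 mu : V).
Local Notation coord := (@Defs.coord R d).

Section VielbeinOfConnection.
Variable om : spin_conn R d.
Hypothesis com : forall a b mu, continuous (om a b mu).

Lemma e_of_omega_contract_coord :
  (forall a b x, \sum_mu coord x mu * om a b mu x = 0) ->
  forall a x, \sum_nu coord x nu * e_of_omega om a nu x = coord x a.
Proof.
move=> gauge a x; rewrite /e_of_omega; under eq_bigr do rewrite mulrDr.
rewrite big_split /= sum_Rintegral01_eq0 => [|nu|t]; last 2 first.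
- exact: continuous_integrand.
- transitivity (\sum_b coord x b * \sum_nu coord (t *: x) nu * om a b nu (t *: x)).
    under eq_bigr do rewrite mulr_sumr.
    rewrite exchange_big /=; apply: eq_bigr => b _.
    by rewrite mulr_sumr; apply: eq_bigr => nu _; rewrite coordZ; ring.
  by rewrite big1 // => b _; rewrite gauge mulr0.
by under eq_bigr do rewrite eq_sym; rewrite sum_deltaR addr0.
Qed.

Lemma e_of_omega_contract_frame :
  (forall a b mu x, om a b mu x = - om b a mu x) ->
  forall mu x, \sum_a coord x a * e_of_omega om a mu x = coord x mu.
Proof.
move=> anti mu x; rewrite /e_of_omega; under eq_bigr do rewrite mulrDr.
rewrite big_split /= sum_Rintegral01_eq0 => [|a|t]; last 2 first.
- exact: continuous_integrand.
- rewrite -[RHS](@sum_quad_antisym _ _ (coord x) (fun a b => t * om a b mu (t *: x))).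
    by apply: eq_bigr => a _; rewrite mulr_sumr; apply: eq_bigr => b _; ring.
  by move=> a b; rewrite anti mulrN.
by rewrite sum_deltaR addr0.
Qed.

End VielbeinOfConnection.

Lemma space_i_to_ii (om : spin_conn R d) : space_i om ->
  space_ii (e_of_omega om) /\
  (forall a b mu x, omega_of_e (e_of_omega om) a b mu x = om a b mu x).
Proof.
case=> som [anti [gauge [ve tors]]]; set e := e_of_omega om.
have com a b mu : continuous (om a b mu) := (smooth_cont_derivable (som a b mu)).1.
have de a nu mu y : derivable (e a nu) y (basis mu).
  exact: (smooth_cont_derivable (ve.1 a nu)).2.
have xe := e_of_omega_contract_coord com gauge.
have ex := e_of_omega_contract_frame com anti.
have omegaK a b mu x : omega_of_e e a b mu x = om a b mu x.
  have u := ve.2 x.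
  exact: (koszul_unique (emx_edual u) (edual_emx u)
    (D := fun c mu rho => dform e c mu rho x) (W := fun a b mu => om a b mu x)
    (fun a b nu => anti a b nu x) (fun a mu nu => tors a mu nu x)).
split=> //; split=> //; split=> //; split=> // a b x.
have u := ve.2 x.
apply: (lie_frame_sym (emx_edual u) (D := fun c mu rho => dform e c mu rho x)
    (W := fun a b mu => om a b mu x) (Y := coord x) (Lam := fun b mu => lie_r e b mu x)
    (fun mu rho => contract_dform de ex mu rho x)
    (fun a mu nu => tors a mu nu x) (fun a b nu => anti a b nu x)).
move=> b' mu'; rewrite (lie_r_dform de xe); congr (_ + _).
exact: (contract_torsion_free (D := fun c mu rho => dform e c mu rho x)
    (W := fun a b mu => om a b mu x) (fun b => xe b x)
    (fun a mu nu => tors a mu nu x) (fun a b => gauge a b x)).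
Qed.

Lemma smooth_omega_of_e (e : frame R d) a b nu :
  is_vielbein e -> smooth (omega_of_e e a b nu).
Proof.
move=> ve; have se := ve.1; have sE a' mu := smooth_edual a' mu ve.
have sD c mu rho : smooth (dform e c mu rho).
  by apply: smoothB; apply: smooth_partial; apply: se.
apply: smoothM; first exact: smooth_cst.
apply: smoothB; first apply: smoothD.
- apply: smoothN; apply: smooth_sum => c _; apply: smoothM => //.
  apply: smooth_sum => mu _; apply: smooth_sum => rho _.
  by apply: smoothM => //; apply: smoothM.
- by apply: smooth_sum => mu _; apply: smoothM.
- by apply: smooth_sum => mu _; apply: smoothM.
Qed.

Lemma is_derive_radial (f : V -> R) (x : V) (t : R) : smooth f ->
  is_derive t 1 (fun s : R => f (s *: x))
    (\sum_nu coord x nu * partial nu f (t *: x)).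
Proof.
move=> sf; have [_ df] := smooth_cont_derivable sf.
have cf mu := (smooth_cont_derivable (smooth_partial mu sf)).1.
have [Df Dval] := is_derive_C1 (t *: x) x df cf.
have -> : (fun s : R => f (s *: x)) = (fun s : R => f (0 + s *: x)).
  by apply/funext => s; rewrite add0r.
rewrite -Dval -[t *: x]add0r; apply: is_derive_line.
by rewrite add0r.
Qed.

Lemma e_of_omega_radial (e : frame R d) (om : spin_conn R d) a mu x :
  smooth (e a mu) -> (forall b, continuous (om a b mu)) ->
  (forall y, lie_r e a mu y = (a == mu)%:R + \sum_b om a b mu y * coord y b) ->
  e_of_omega om a mu x = e a mu x.
Proof.
move=> se com lie; set del : R := (a == mu)%:R.
pose G t := \sum_b om a b mu (t *: x) * t * coord x b.
pose F t := t * (e a mu (t *: x) - del).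
(* The radial equation says F' = G, so G integrates to F 1 - F 0 on [0, 1]. *)
have DF (t : R) : is_derive t 1 F (G t).
  have DFt := is_deriveM (is_derive_id t 1)
    (is_deriveB (is_derive_radial x t se) (is_derive_cst del t 1)).
  apply: is_derive_eq DFt _; set S := \sum_nu _.
  rewrite -[LHS]/(t * (S - 0) + (e a mu (t *: x) - del) * 1) subr0 mulr1.
  have := lie (t *: x); rewrite /lie_r.
  have -> : \sum_nu coord (t *: x) nu * partial nu (e a mu) (t *: x) = t * S.
    by rewrite mulr_sumr; apply: eq_bigr => nu _; rewrite coordZ mulrA.
  have -> : \sum_b om a b mu (t *: x) * coord (t *: x) b = G t.
    by apply: eq_bigr => b _; rewrite coordZ mulrA.
  lra.
have cF (t : R) : {for t, continuous F}.
  by have [DFt _] := DF t; exact/differentiable_continuous/derivable1_diffP.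
have dF : derivable_oo_LRcontinuous F 0 1.
  split=> [t _||]; first by have [] := DF t.
  - exact: cvg_at_right_filter (cF 0).
  - exact: cvg_at_left_filter (cF 1).
have FG : {in `]0, 1[, (F^`())%classic =1 G}.
  by move=> t _; rewrite derive1E; have [_ ->] := DF t.
have := continuous_FTC2 ltr01 (continuous_subspaceT (continuous_integrand (x := x) com)) dF FG.
have -> : e_of_omega om a mu x =
    del + fine (\int[lebesgue_measure]_(t in `[0%R, 1%R]) (G t)%:E)%E by [].
move=> ->; rewrite -EFinB /= /F scale1r mul1r mul0r subr0.
by rewrite addrC subrK.
Qed.

Lemma space_ii_to_i (e : frame R d) : space_ii e ->
  space_i (omega_of_e e) /\
  (forall a mu x, e_of_omega (omega_of_e e) a mu x = e a mu x).
Proof.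
case=> ve [xe [ex sym]].
have de a nu mu y : derivable (e a nu) y (basis mu).
  exact: (smooth_cont_derivable (ve.1 a nu)).2.
have de_anti x c mu rho : dform e c mu rho x = - dform e c rho mu x.
  by rewrite /dform opprB.
have tors a mu nu x : torsion (fun a mu => e a mu x)
    (fun c mu rho => dform e c mu rho x) (fun a b mu => omega_of_e e a b mu x) a mu nu = 0.
  have u := ve.2 x.
  exact: (koszul_torsion_free (emx_edual u) (edual_emx u) (de_anti x)).
have anti a b mu x : omega_of_e e a b mu x = - omega_of_e e b a mu x.
  have u := ve.2 x; exact: (koszul_antisym (edual_emx u) (de_anti x)).
have gauge a b x : \sum_nu coord x nu * omega_of_e e a b nu x = 0.
  have u := ve.2 x.
  apply: (koszul_gauge (emx_edual u) (D := fun c mu rho => dform e c mu rho x)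
    (Y := coord x) (Lam := fun a mu => lie_r e a mu x) (fun a => xe a x)
    (fun mu rho => contract_dform de ex mu rho x)) => [a' mu'|a' b'].
    rewrite lie_r_dform // opprD addrA subrr add0r -sumrN.
    by apply: eq_bigr => rho _; rewrite de_anti mulrN.
  exact: sym.
have lie a mu y : lie_r e a mu y =
    (a == mu)%:R + \sum_b omega_of_e e a b mu y * coord y b.
  rewrite lie_r_dform //; congr (_ + _).
  exact: (contract_torsion_free (D := fun c mu rho => dform e c mu rho y)
    (W := fun a b mu => omega_of_e e a b mu y) (fun b => xe b y)
    (fun a mu nu => tors a mu nu y) (fun a b => gauge a b y)).
have som a b mu := smooth_omega_of_e a b mu ve.
have eK : e_of_omega (omega_of_e e) = e.
  apply/funext => a; apply/funext => mu; apply/funext => x.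
  apply: e_of_omega_radial (ve.1 a mu) _ (lie a mu) => b.
  exact: (smooth_cont_derivable (som a b mu)).1.
split; last by rewrite eK.
by do 4 (split => //); rewrite eK.
Qed.

End Correspondence.

Theorem theorem2 (R : realType) (d : nat) :
  (forall om : spin_conn R d,
     space_i om ->
     space_ii (e_of_omega om) /\
     (forall a b mu x, omega_of_e (e_of_omega om) a b mu x = om a b mu x)) /\
  (forall e : frame R d,
     space_ii e ->
     space_i (omega_of_e e) /\
     (forall a mu x, e_of_omega (omega_of_e e) a mu x = e a mu x)).
Proof. by split=> [om|e]; [exact: space_i_to_ii|exact: space_ii_to_i]. Qed.
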